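(* Let $Q$ be a non-empty finite set of primes, $d\ge1$ an integer, $\ell$ a positive odd integer, and $m:\mathbb Z_{>0}\to\mathbb R_{>0}$ a multiplicative function with $m(q)\le q-1$ and $m(q)\le d$ for all $q\in Q$. Let $Q(\ell)=\{r\in\mathcal D(\prod_{q\in Q}q):\omega(r)\le\ell\}$ and $W_m(Q)=\prod_{q\in Q}(1-\frac{m(q)}{q})$. Then $$\sum_{r\in Q(\ell)}\frac{\mu(r)\,m(r)}{r}\;\ge\;W_m(Q)\Big(1-\Big(\frac{e\,\alpha}{\ell}\Big)^{\ell}\alpha\, e^{\alpha}\Big),\qquad\text{where }\alpha=(d+1)^2(2+\ln\ln(|Q|+1)).$$
   Context: $\mathcal D(n)$ is the set of positive divisors of $n$; $\omega(r)$ is the number of distinct prime divisors of $r$; $\mu$ is the Möbius function (for square-free $r$, $\mu(r)=(-1)^{\omega(r)}$). A function $m$ is multiplicative if $m(ab)=m(a)m(b)$ for all coprime positive integers $a,b$. $e$ is Euler's number. *)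

From HB Require Import structures.
From mathcomp Require Import all_boot all_order all_algebra.
From mathcomp Require Import all_classical all_reals all_analysis.
Set Implicit Arguments. Unset Strict Implicit. Unset Printing Implicit Defensive.
Import Order.TTheory GRing.Theory Num.Theory.
Local Open Scope ring_scope.

Definition omega (n : nat) : nat := size (primes n).

Definition mobius (n : nat) : int :=
  if all (fun p => logn p n == 1%N) (primes n) then (-1) ^+ omega n else 0%R.

Definition multiplicative_fn {R : ringType} (m : nat -> R) : Prop :=
  forall a b : nat, (0 < a)%N -> (0 < b)%N -> coprime a b -> m (a * b)%N = m a * m b.

From HB Require Import structures.
From mathcomp Require Import all_boot all_order all_algebra.
From mathcomp Require Import all_classical all_reals all_analysis.
From mathcomp Require Import ring lra zify.
Import Order.TTheory GRing.Theory Num.Theory.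
Local Open Scope ring_scope.
Set Implicit Arguments. Unset Strict Implicit. Unset Printing Implicit Defensive.

(* With [x_q = m q / q], multiplicativity turns the sum over the squarefree
   [r | \prod Q] with [omega r <= ell] into the expansion of
   [W = \prod_q (1 - x_q)] truncated to degree [ell]; an induction on [Q] bounds
   the truncation error by [X^(ell+1) / (ell+1)!] with [X = \sum_q x_q], in
   absolute value, so the parity of [ell] is not needed.  Then
   [X <= Y = \sum_q x_q / (1 - x_q) <= alpha]: primes [q <= d + 1] contribute
   at most [q] each and larger ones at most [(d + 1)^2 / (2 q)], while
   [\sum_(q in Q) 1 / q <= 2 + 2 ln ln (|Q| + 1)] follows from Chebyshev's bound
   on the primes of a dyadic interval.  Finally [ell^ell <= e^ell ell!] gives
   [X^(ell+1) / (ell+1)! <= (e alpha / ell)^ell alpha], and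
   [W >= exp (- Y) >= exp (- alpha)] makes this error relative to [W]. *)

(** * Squarefree divisors and the truncated product *)

Lemma perm_primesM_prime q r : prime q -> (0 < r)%N -> ~~ (q %| r)%N ->
  perm_eq (primes (q * r)) (q :: primes r).
Proof.
move=> pq r0 nqr; apply: uniq_perm; first exact: primes_uniq.
  by rewrite /= primes_uniq andbT mem_primes !negb_and nqr !orbT.
move=> p; rewrite primesM ?(prime_gt0 pq) // primes_prime // in_cons inE.
by rewrite orbF in_cons.
Qed.

Lemma omegaM_prime q r : prime q -> (0 < r)%N -> ~~ (q %| r)%N ->
  omega (q * r) = (omega r).+1.
Proof.
by move=> pq r0 nqr; rewrite /omega (perm_size (perm_primesM_prime pq r0 nqr)).
Qed.

Lemma mobiusM_prime q r : prime q -> (0 < r)%N -> ~~ (q %| r)%N ->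
  mobius (q * r) = - mobius r.
Proof.
move=> pq r0 nqr; rewrite /mobius (omegaM_prime pq r0 nqr).
rewrite (perm_all _ (perm_primesM_prime pq r0 nqr)) /=.
have -> : logn q (q * r) = 1%N.
  rewrite lognM ?(prime_gt0 pq) // logn_prime // eqxx /=.
  by rewrite logn_coprime // prime_coprime.
have -> : all (fun p => logn p (q * r) == 1%N) (primes r) =
          all (fun p => logn p r == 1%N) (primes r).
  apply: eq_in_all => p; rewrite mem_primes => /andP[pp /andP[_ pr]].
  rewrite lognM ?(prime_gt0 pq) // logn_prime //.
  by case: (eqVneq p q) => // epq; rewrite -epq pr in nqr.
by case: all; rewrite ?oppr0 // exprS mulN1r.
Qed.

Lemma perm_divisorsM_prime q n : prime q -> (0 < n)%N -> ~~ (q %| n)%N ->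
  perm_eq (divisors (q * n)) (divisors n ++ map (muln q) (divisors n)).
Proof.
move=> pq n0 nqn; have q0 := prime_gt0 pq.
apply: uniq_perm; first exact: divisors_uniq.
  rewrite cat_uniq divisors_uniq map_inj_uniq ?divisors_uniq; last first.
    by move=> a b /eqP; rewrite eqn_pmul2l // => /eqP.
  rewrite andbT /=; apply/hasPn => _ /mapP[e _ ->].
  rewrite -dvdn_divisors //; apply: contra nqn => /(dvdn_trans _); apply.
  exact: dvdn_mulr.
move=> e; rewrite mem_cat -!dvdn_divisors ?muln_gt0 ?q0 //.
apply/idP/orP => [eqn | [en | /mapP[f]]].
- have [qe | nqe] := boolP (q %| e)%N; last first.
    by left; rewrite -(@Gauss_dvdr _ q) // coprime_sym prime_coprime.
  right; apply/mapP; exists (e %/ q)%N; last by rewrite mulnC divnK.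
  by rewrite -dvdn_divisors // -(dvdn_pmul2l q0) mulnC divnK.
- exact: dvdn_trans en (dvdn_mull _ _).
- by rewrite -dvdn_divisors // => fn ->; rewrite dvdn_pmul2l.
Qed.

Lemma multiplicative_fn1 (R : idomainType) (m : nat -> R) :
  multiplicative_fn m -> m 1%N != 0 -> m 1%N = 1.
Proof. by move=> mM m1; apply: (mulfI m1); rewrite mulr1 -mM ?coprime1n. Qed.

(* [trunc_prod1B xs l] is the expansion of [\prod_(x <- xs) (1 - x)] truncated
   to its monomials of degree at most [l], i.e. [\sum_(k <= l) (-1)^k e_k(xs)]. *)
Fixpoint trunc_prod1B {R : pzRingType} (xs : seq R) (l : nat) : R :=
  match xs, l with
  | [::], _ => 1
  | _ :: xs', 0 => trunc_prod1B xs' 0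
  | x :: xs', l'.+1 => trunc_prod1B xs' l'.+1 - x * trunc_prod1B xs' l'
  end.

Lemma trunc_prod1B_full (R : pzRingType) (xs : seq R) l : (size xs <= l)%N ->
  trunc_prod1B xs l = \prod_(x <- xs) (1 - x).
Proof.
elim: xs l => [|x xs IH] l; first by rewrite big_nil.
case: l => // l /= xsl.
by rewrite big_cons (IH l.+1 (ltnW xsl)) (IH l xsl) mulrBl mul1r.
Qed.

Lemma prime_ndvd_prod_primes q (Q : seq nat) : prime q -> all prime Q ->
  q \notin Q -> ~~ (q %| \prod_(p <- Q) p)%N.
Proof.
move=> pq pQ qQ; rewrite Euclid_dvd_prod // big_has; apply/hasPn => p pin /=.
rewrite dvdn_prime2 //; last exact: (allP pQ).
by apply: contraNneq qQ => ->.
Qed.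

Lemma sum_divisors_mobius_omega_le (R : numFieldType) (m : nat -> R) Q l :
  uniq Q -> all prime Q -> multiplicative_fn m -> m 1%N = 1 ->
  \sum_(r <- divisors (\prod_(q <- Q) q) | (omega r <= l)%N)
      (mobius r)%:~R * m r / r%:R = trunc_prod1B [seq m q / q%:R | q <- Q] l.
Proof.
move=> + + mM m1; elim: Q l => [|q Q IH] l.
  move=> _ _; rewrite big_nil (_ : divisors 1 = [:: 1%N]) //.
  by rewrite big_cons big_nil /= m1 mulr1 divr1 addr0.
rewrite /= => /andP[qQ uQ] /andP[pq pQ].
have n0 : (0 < \prod_(p <- Q) p)%N.
  by rewrite big_seq prodn_cond_gt0 // => p /(allP pQ)/prime_gt0.
have nqn := prime_ndvd_prod_primes pq pQ qQ.
have dvd_prod r : r \in divisors (\prod_(p <- Q) p) -> (0 < r)%N /\ ~~ (q %| r)%N.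
  rewrite -dvdn_divisors // => rn; split; first exact: dvdn_gt0 rn.
  by apply: contra nqn => /dvdn_trans; apply.
rewrite big_cons (perm_big _ (perm_divisorsM_prime pq n0 nqn)) big_cat /=.
rewrite big_map IH // big_seq_cond.
case: l => [|l] /=.
  rewrite big1 ?addr0 // => r /andP[rQ].
  by have [r0 nqr] := dvd_prod r rQ; rewrite omegaM_prime.
congr (_ + _); rewrite -[RHS]mulNr -IH // mulr_sumr [RHS]big_seq_cond.
apply: eq_big => [r | r /andP[rQ _]].
  by case: (boolP (r \in _)) => //= /dvd_prod[r0 nqr]; rewrite omegaM_prime.
have [r0 nqr] := dvd_prod r rQ.
rewrite mobiusM_prime // mM ?(prime_gt0 pq) ?prime_coprime // natrM rmorphN /=.
have qn0 : (q%:R : R) != 0 by rewrite pnatr_eq0 -lt0n prime_gt0.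
have rn0 : (r%:R : R) != 0 by rewrite pnatr_eq0 -lt0n.
by field; rewrite rn0 qn0.
Qed.

(** * The truncation error *)

Lemma prod1B_ge0_le1 (R : numDomainType) (xs : seq R) :
  all (fun x => 0 <= x <= 1) xs -> 0 <= \prod_(x <- xs) (1 - x) <= 1.
Proof.
elim: xs => [|x xs IH]; first by rewrite big_nil ler01 lexx.
rewrite /= big_cons => /andP[/andP[x0 x1] /IH /andP[p0 p1]].
by rewrite mulr_ge0 ?subr_ge0 //= mulr_ile1 ?subr_ge0 // lerBlDr lerDl.
Qed.

Lemma exprD_ge_lin (R : realFieldType) (z x : R) n : 0 <= z -> 0 <= x ->
  z ^+ n.+1 + n.+1%:R * x * z ^+ n <= (z + x) ^+ n.+1.
Proof.
move=> z0 x0; elim: n => [|n IH]; first by rewrite !expr1 expr0 mulr1 mul1r.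
rewrite [(z + x) ^+ _]exprS; apply: le_trans (ler_wpM2l (addr_ge0 z0 x0) IH).
have zn0 : 0 <= z ^+ n by rewrite exprn_ge0.
rewrite !exprS -!natr1; set a := z ^+ n; set N := n%:R.
have : 0 <= (N + 1) * (x * x * a) by rewrite mulr_ge0 ?mulr_ge0 ?addr_ge0 ?ler0n.
nra.
Qed.

(* The errors satisfy [e (x :: xs) l.+1 = e xs l.+1 - x * e xs l], so the bound
   propagates through [Z^(l+2) + (l+2) x Z^(l+1) <= (Z + x)^(l+2)]. *)
Lemma trunc_prod1B_error (R : realFieldType) (xs : seq R) l :
  all (fun x => 0 <= x <= 1) xs ->
  `|\prod_(x <- xs) (1 - x) - trunc_prod1B xs l|
    <= (\sum_(x <- xs) x) ^+ l.+1 / l.+1`!%:R.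
Proof.
elim: xs l => [|x xs IH] l.
  by rewrite big_nil /= subrr normr0 big_nil expr0n mul0r.
rewrite /= !big_cons => /andP[/andP[x0 x1] xs01].
have /andP[W0 W1] := prod1B_ge0_le1 xs01.
have Z0 : 0 <= \sum_(y <- xs) y.
  by rewrite big_seq sumr_ge0 // => y /(allP xs01)/andP[].
set Z := \sum_(y <- xs) y in Z0 IH *.
set W := \prod_(y <- xs) (1 - y) in W0 W1 IH *.
case: l => [|l].
  have := IH 0%N xs01; rewrite !expr1 !divr1 => IH0.
  rewrite (_ : _ - _ = (W - trunc_prod1B xs 0) - x * W); last by ring.
  apply: le_trans (ler_normB _ _) _.
  rewrite normrM (ger0_norm x0) (ger0_norm W0).
  have : x * W <= x by rewrite ler_piMr.
  by rewrite addrC; lra.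
rewrite (_ : _ - _ = (W - trunc_prod1B xs l.+1) - x * (W - trunc_prod1B xs l));
  last by ring.
apply: le_trans (ler_normB _ _) _; rewrite normrM (ger0_norm x0).
apply: le_trans (lerD (IH l.+1 xs01) (ler_wpM2l x0 (IH l xs01))) _.
have f0 : (0 : R) < l.+1`!%:R by rewrite ltr0n fact_gt0.
have l0 : (0 : R) < l.+2%:R by rewrite ltr0n.
have -> : x * (Z ^+ l.+1 / l.+1`!%:R)
        = (l.+2%:R * x * Z ^+ l.+1) / l.+2`!%:R.
  by rewrite [l.+2`!]factS natrM; field; rewrite ?gt_eqF.
rewrite -mulrDl ler_wpM2r ?invr_ge0 ?ler0n // [x + Z]addrC.
by have := exprD_ge_lin l.+1 Z0 x0; rewrite addrC.
Qed.

(** * Reciprocals of primes *)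

Lemma leq_bin_exp2 n k : ('C(n, k) <= 2 ^ n)%N.
Proof.
elim: n k => [|n IH] [|k] //=; first by rewrite expn_gt0.
by rewrite binS expnS mul2n -addnn leq_add.
Qed.

Lemma prime_ndvd_fact p n : prime p -> (n < p)%N -> ~~ (p %| n`!)%N.
Proof.
move=> pp np; rewrite fact_prod Euclid_dvd_prod // big_has; apply/hasPn => i.
rewrite mem_index_iota => /andP[i1 iN] /=; apply/negP => /dvdn_leq.
by move=> /(_ i1) pi; lia.
Qed.

Lemma prime_dvd_bin_mid p n : prime p -> (n < p <= n.*2)%N ->
  (p %| 'C(n.*2, n))%N.
Proof.
move=> pp /andP[np pn2].
have := bin_fact (leq_addr n n); rewrite addnn -{2}addnn addnK => binE.
have : (p %| 'C(n.*2, n) * (n`! * n`!))%N by rewrite binE dvdn_fact ?prime_gt0.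
by rewrite !Euclid_dvdM // orbb (negPf (prime_ndvd_fact pp np)) orbF.
Qed.

Lemma prod_uniq_primes_dvd (s : seq nat) M : uniq s -> all prime s ->
  all (dvdn^~ M) s -> (\prod_(p <- s) p %| M)%N.
Proof.
elim: s => [|p s IH]; first by rewrite big_nil dvd1n.
rewrite /= => /andP[ps us] /andP[pp ps'] /andP[pM sM]; rewrite big_cons.
by rewrite Gauss_dvd ?pM ?IH // prime_coprime // prime_ndvd_prod_primes.
Qed.

Lemma leq_exp_prod (s : seq nat) n :
  all (leq n) s -> (n ^ size s <= \prod_(p <- s) p)%N.
Proof.
elim: s => [|p s IH]; first by rewrite big_nil.
by rewrite /= big_cons expnS => /andP[np /IH h]; rewrite leq_mul.
Qed.

Definition dyadic_primes j :=
  [seq p <- index_iota (2 ^ j).+1 (2 ^ j.+1).+1 | prime p].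

(* Chebyshev: the primes in [(2^j, 2^(j+1)]] all divide ['C(2^(j+1), 2^j)],
   which is at most [2^(2^(j+1))] while their product exceeds [2^(j * #primes)]. *)
Lemma dyadic_primes_size j : (j * size (dyadic_primes j) <= 2 ^ j.+1)%N.
Proof.
set n := (2 ^ j)%N; have n2 : n.*2 = (2 ^ j.+1)%N by rewrite expnS mul2n.
have lb : (n ^ size (dyadic_primes j) <= \prod_(p <- dyadic_primes j) p)%N.
  apply/leq_exp_prod/allP => p; rewrite mem_filter mem_index_iota.
  by case/andP => _ /andP[/ltnW].
have ub : (\prod_(p <- dyadic_primes j) p <= 'C(n.*2, n))%N.
  apply: dvdn_leq; first by rewrite bin_gt0 -addnn leq_addr.
  apply: prod_uniq_primes_dvd.
  - by rewrite filter_uniq // iota_uniq.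
  - by apply/allP => p; rewrite mem_filter => /andP[].
  - apply/allP => p; rewrite mem_filter mem_index_iota => /andP[pp /andP[np pn]].
    by apply: prime_dvd_bin_mid; rewrite // np n2 -ltnS.
rewrite -(leq_exp2l _ _ (isT : (1 < 2)%N)) expnM -/n -n2.
by rewrite (leq_trans lb) // (leq_trans ub) // leq_bin_exp2.
Qed.

Lemma le1Bv_ln (R : realType) (x : R) : 0 < x -> 1 - x^-1 <= ln x.
Proof.
move=> x0; have xV0 : 0 < x^-1 by rewrite invr_gt0.
have /le_ln1Dx : -1 < x^-1 - 1 by lra.
by rewrite (_ : 1 + _ = x^-1) ?lnV ?posrE //; [lra | ring].
Qed.

Lemma invn_le_lnB (R : realType) j : (1 < j)%N ->
  (j%:R : R)^-1 <= ln (j%:R : R) - ln j.-1%:R.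
Proof.
move=> j1; have j0 : (0 < j.-1)%N by rewrite -ltnS prednK // ltnW.
have a0 : (0 : R) < j.-1%:R by rewrite ltr0n.
rewrite -ln_div ?posrE ?ltr0n ?(ltnW j1) //.
apply: le_trans (le1Bv_ln (divr_gt0 _ a0)); last by rewrite ltr0n ltnW.
have -> : (j%:R : R) = j.-1%:R + 1 by rewrite natr1 prednK // ltnW.
by rewrite le_eqVlt; apply/orP; left; apply/eqP; field; rewrite !gt_eqF ?addr_gt0.
Qed.

Lemma sum_invn_le_lnB (R : realType) a b : (1 < a)%N -> (a <= b)%N ->
  \sum_(a <= j < b) (j%:R : R)^-1 <= ln (b.-1%:R : R) - ln a.-1%:R.
Proof.
move=> a1; elim: b => [|b IH]; first by rewrite leqn0 => /eqP a0; rewrite a0 in a1.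
rewrite leq_eqVlt => /orP[/eqP <-|]; first by rewrite big_geq // subrr.
rewrite ltnS => ab; rewrite big_nat_recr //=.
by have := invn_le_lnB R (leq_trans a1 ab); have := IH ab; lra.
Qed.

Lemma ln2_ge (R : realType) : 5 / 8 <= ln (2 : R).
Proof.
have := sum_invn_le_lnB R (isT : (1 < 5)%N) (isT : (5 <= 9)%N).
have -> : ln (8%:R : R) = ln 2 + ln 4 by rewrite -lnM ?posrE // -natrM.
by rewrite big_ltn // big_ltn // big_ltn // big_ltn // big_geq //; lra.
Qed.

Lemma ln3_ge1 (R : realType) : 1 <= ln (3 : R).
Proof.
have := sum_invn_le_lnB R (isT : (1 < 9)%N) (isT : (9 <= 13)%N).
have -> : ln (12%:R : R) = ln 3 + ln 4 by rewrite -lnM ?posrE // -natrM.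
have -> : ln (8%:R : R) = ln 2 + ln 4 by rewrite -lnM ?posrE // -natrM.
rewrite big_ltn // big_ltn // big_ltn // big_ltn // big_geq //.
by have := ln2_ge R; lra.
Qed.

Definition sum_inv_primes (R : numFieldType) N : R :=
  \sum_(0 <= p < N.+1 | prime p) (p%:R)^-1.

Lemma sum_inv_primes_le (R : numFieldType) a b : (a <= b)%N ->
  sum_inv_primes R a <= sum_inv_primes R b.
Proof.
move=> ab; rewrite /sum_inv_primes [leRHS](big_cat_nat (n := a.+1)) //= ?ltnS //.
by rewrite lerDl sumr_ge0 // => i _; rewrite invr_ge0 ler0n.
Qed.

Lemma sumr_const_seq (V : nmodType) (I : Type) (s : seq I) (c : V) :
  \sum_(i <- s) c = c *+ size s.
Proof. by rewrite big_const_seq count_predT iter_addr_0. Qed.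

Lemma sum_inv_primes_dyadic (R : numFieldType) j : (0 < j)%N ->
  sum_inv_primes R (2 ^ j.+1) <= sum_inv_primes R (2 ^ j) + 2 / j%:R.
Proof.
move=> j0; rewrite /sum_inv_primes [leLHS](big_cat_nat (n := (2 ^ j).+1)) //=;
  last by rewrite ltnS leq_exp2l.
rewrite lerD2l -big_filter -/(dyadic_primes j).
apply: (@le_trans _ _ (\sum_(p <- dyadic_primes j) ((2 ^ j)%:R)^-1)).
  rewrite big_seq [leRHS]big_seq; apply: ler_sum => p.
  rewrite mem_filter mem_index_iota => /andP[_ /andP[jp _]].
  by rewrite lef_pV2 ?posrE ?ltr0n ?expn_gt0 ?(leq_ltn_trans _ jp) // ler_nat ltnW.
rewrite sumr_const_seq -[_ *+ _]mulr_natl ler_pdivrMr ?ltr0n ?expn_gt0 // mulrAC.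
rewrite ler_pdivlMr ?ltr0n // -!natrM ler_nat mulnC -expnS.
exact: dyadic_primes_size.
Qed.

Lemma sum_inv_primes_exp2_5 (R : realFieldType) : sum_inv_primes R (2 ^ 5) <= 7 / 4.
Proof.
rewrite /sum_inv_primes -big_filter.
have -> : [seq p <- index_iota 0 (2 ^ 5).+1 | prime p] =
  [:: 2; 3; 5; 7; 11; 13; 17; 19; 23; 29; 31]%N by [].
by rewrite !big_cons big_nil; lra.
Qed.

(* [7 / 4] accounts for the primes up to [32]; each further dyadic block
   contributes at most [2 / J <= 2 (ln J - ln (J - 1))]. *)
Lemma sum_inv_primes_exp2 (R : realType) J : (5 <= J)%N ->
  sum_inv_primes R (2 ^ J) <= 7 / 4 + 2 * ln (J.-1%:R / 4 : R).
Proof.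
elim: J => // J IH; rewrite leq_eqVlt => /orP[/eqP <- | J5].
  by rewrite divff ?ln1 ?mulr0 ?addr0 ?pnatr_eq0 //; exact: sum_inv_primes_exp2_5.
have J1 : (1 < J)%N by lia.
apply: le_trans (sum_inv_primes_dyadic R (ltnW J1)) _.
have J0 : (0 : R) < J%:R by rewrite ltr0n; lia.
have Jm0 : (0 : R) < J.-1%:R by rewrite ltr0n; lia.
have := IH J5; have := invn_le_lnB R J1.
rewrite /= !ln_div ?posrE //; lra.
Qed.

Lemma ler_sum_subset (R : numDomainType) (I : eqType) (s t : seq I) (F : I -> R) :
  uniq s -> uniq t -> {subset s <= t} -> (forall i, i \in t -> 0 <= F i) ->
  \sum_(i <- s) F i <= \sum_(i <- t) F i.
Proof.
move=> us ut st F0; rewrite [leRHS](bigID (mem s)) /=.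
have -> : \sum_(i <- t | i \in s) F i = \sum_(i <- s) F i.
  rewrite -big_filter; apply/perm_big/uniq_perm; rewrite ?filter_uniq //.
  by move=> i; rewrite mem_filter andb_idr //; apply: st.
by rewrite lerDl big_seq_cond sumr_ge0 // => i /andP[/F0].
Qed.

Lemma sum_inv_prime_seq_le (R : numFieldType) (Q : seq nat) N :
  uniq Q -> all prime Q ->
  \sum_(q <- Q | (q <= N)%N) (q%:R : R)^-1 <= sum_inv_primes R N.
Proof.
move=> uQ pQ; rewrite -big_filter /sum_inv_primes -[leRHS]big_filter.
apply: ler_sum_subset.
- exact: filter_uniq.
- by rewrite filter_uniq // iota_uniq.
- move=> q; rewrite !mem_filter mem_index_iota ltnS => /andP[qN qQ].
  by rewrite qN (allP pQ q qQ).
- by move=> i _; rewrite invr_ge0 ler0n.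
Qed.

Lemma sum_inv_gt_le (R : numFieldType) (s : seq nat) N : (0 < N)%N ->
  \sum_(q <- s | (N < q)%N) (q%:R : R)^-1 <= (size s)%:R / N%:R.
Proof.
move=> N0; apply: (@le_trans _ _ (\sum_(q <- s) (N%:R : R)^-1)).
  rewrite [leRHS](bigID (fun q => N < q)%N) /= ler_wpDr //.
    by rewrite sumr_ge0 // => i _; rewrite invr_ge0 ler0n.
  apply: ler_sum => q Nq.
  by rewrite lef_pV2 ?posrE ?ltr0n ?(ltn_trans N0 Nq) // ler_nat ltnW.
by rewrite sumr_const_seq -[_ *+ _]mulr_natl.
Qed.

Lemma sum_inv_primes_le_lnln (R : realType) n : (3 <= n)%N ->
  sum_inv_primes R (2 ^ (trunc_log 2 n).+1.*2) <= 7 / 4 + 2 * ln (ln (n%:R : R)).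
Proof.
move=> n3; set b := (trunc_log 2 n).+1.
have n2b : (2 ^ b.-1 <= n)%N by apply: trunc_logP; lia.
have l2 := ln2_ge R.
have lnn1 : 1 <= ln (n%:R : R).
  by apply: le_trans (ln3_ge1 R) _; rewrite ler_ln ?posrE ?ltr0n ?ler_nat //; lia.
have [b3 | b3] := ltnP b 3.
  apply: le_trans (sum_inv_primes_le _ (_ : _ <= 2 ^ 5)%N) _.
    by rewrite leq_exp2l //; lia.
  by have := sum_inv_primes_exp2_5 R; have := ln_ge0 lnn1; lra.
apply: le_trans (sum_inv_primes_exp2 R (_ : 5 <= b.*2)%N) _; first by lia.
rewrite lerD2l ler_pM2l // ler_ln ?posrE ?divr_gt0 ?ltr0n //; last lra.
have lnb : (b.-1)%:R * ln 2 <= ln (n%:R : R).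
  rewrite mulr_natl -lnXn // -natrX.
  by rewrite ler_ln ?posrE ?ltr0n ?expn_gt0 ?ler_nat //; lia.
have e2b : ((b.*2).-1%:R : R) + 1 = 2 * b%:R.
  by rewrite natr1 prednK ?double_gt0 // -mul2n natrM.
have eb : (b.-1%:R : R) + 1 = b%:R by rewrite natr1 prednK.
have b3' : (3 : R) <= b%:R by rewrite ler_nat.
nra.
Qed.

Lemma sum_inv_prime_seq_lnln (R : realType) (Q : seq nat) :
  uniq Q -> all prime Q -> (2 <= size Q)%N ->
  \sum_(q <- Q) (q%:R : R)^-1 <= 2 + 2 * ln (ln ((size Q).+1%:R)).
Proof.
move=> uQ pQ Q2; set k := size Q in Q2 *; set b := (trunc_log 2 k.+1).+1.
have kb : (k.+1 < 2 ^ b)%N by apply: trunc_log_ltn.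
have kT : (4 * k <= 2 ^ b.*2)%N.
  by rewrite -addnn expnD; move: kb; set B := (2 ^ b)%N; nia.
have T0 : (0 < 2 ^ b.*2)%N by rewrite expn_gt0.
rewrite (bigID (fun q => q <= 2 ^ b.*2)%N) /=.
under [X in _ + X]eq_bigl do rewrite -ltnNge.
have small := sum_inv_prime_seq_le R (2 ^ b.*2) uQ pQ.
have large := sum_inv_gt_le R Q T0.
have kT' : (k%:R : R) / (2 ^ b.*2)%:R <= 1 / 4.
  by rewrite ler_pdivrMr ?ltr0n //; move: kT; rewrite -(ler_nat R) natrM; lra.
by have := sum_inv_primes_le_lnln R (Q2 : 3 <= k.+1)%N; rewrite -/b; lra.
Qed.

Definition odds (R : fieldType) (x : R) := x / (1 - x).

Lemma odds_divE (R : realFieldType) (a q : R) : 0 < q -> a < q ->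
  odds (a / q) = a / (q - a).
Proof. by move=> q0 aq; rewrite /odds; field; rewrite ?gt_eqF ?subr_gt0. Qed.

Lemma odds_div_le (R : realFieldType) (a q : R) : 0 < a -> a <= q - 1 ->
  odds (a / q) <= q.
Proof.
move=> a0 aq; rewrite odds_divE; [|lra|lra].
by rewrite ler_pdivrMr; [nra | lra].
Qed.

Lemma odds_div_le_inv (R : realFieldType) (a q d : R) :
  0 < a -> 0 <= d -> d + 2 <= q -> a <= d ->
  odds (a / q) <= (d + 1) ^+ 2 / 2 * q^-1.
Proof.
move=> a0 d0 dq ad; rewrite odds_divE; [|lra|lra].
rewrite (_ : _ / 2 * _ = (d + 1) ^+ 2 / (2 * q));
  last by field; rewrite gt_eqF //; lra.
rewrite ler_pdivrMr; last lra.
rewrite mulrAC ler_pdivlMr; last lra.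
have h1 : 0 <= (q - d - 2) * (d ^+ 2 + 1).
  by apply: mulr_ge0; [lra | rewrite addr_ge0 ?sqr_ge0].
have h2 : 0 <= (d - a) * (2 * q + (d + 1) ^+ 2).
  by apply: mulr_ge0; [lra | rewrite addr_ge0 ?sqr_ge0 //; lra].
rewrite !expr2 in h1 h2 *; nra.
Qed.

Lemma sum_iota_le_sqr n : (\sum_(0 <= i < n.+1) i <= n * n)%N.
Proof.
elim: n => [|n IH]; first by rewrite big_nat1.
by rewrite big_nat_recr //=; lia.
Qed.

Lemma sum_odds_le (R : realType) (Q : seq nat) (d : nat) (m : nat -> R) :
  uniq Q -> all prime Q -> (2 <= size Q)%N ->
  (forall q, q \in Q -> 0 < m q) -> (forall q, q \in Q -> m q <= q%:R - 1) ->
  (forall q, q \in Q -> m q <= d%:R) ->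
  \sum_(q <- Q) odds (m q / q%:R) <= d.+1%:R ^+ 2 * (2 + ln (ln (size Q).+1%:R)).
Proof.
move=> uQ pQ Q2 m0 mq md; have HQ := sum_inv_prime_seq_lnln R uQ pQ Q2.
rewrite (bigID (fun q => q <= d.+1)%N) /=.
have small : \sum_(q <- Q | (q <= d.+1)%N) odds (m q / q%:R) <= d.+1%:R ^+ 2.
  apply: (@le_trans _ _ (\sum_(q <- Q | (q <= d.+1)%N) (q%:R : R))).
    rewrite big_seq_cond [leRHS]big_seq_cond; apply: ler_sum => q /andP[qQ _].
    exact: odds_div_le (m0 q qQ) (mq q qQ).
  apply: (@le_trans _ _ (\sum_(0 <= i < d.+2) (i%:R : R))).
    rewrite -big_filter; apply: ler_sum_subset.
    - exact: filter_uniq.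
    - exact: iota_uniq.
    - by move=> q; rewrite mem_filter mem_index_iota ltnS => /andP[-> _].
    - by move=> i _; rewrite ler0n.
  by rewrite -natr_sum -natrX ler_nat expnSr expn1 sum_iota_le_sqr.
have large : \sum_(q <- Q | ~~ (q <= d.+1)%N) odds (m q / q%:R)
    <= d.+1%:R ^+ 2 / 2 * \sum_(q <- Q) (q%:R : R)^-1.
  rewrite mulr_sumr [leRHS](bigID (fun q => q <= d.+1)%N) /= ler_wpDl //.
    by rewrite sumr_ge0 // => i _;
      rewrite mulr_ge0 ?invr_ge0 ?ler0n ?divr_ge0 ?sqr_ge0.
  rewrite big_seq_cond [leRHS]big_seq_cond; apply: ler_sum => q /andP[qQ dq].
  rewrite -natr1; apply: odds_div_le_inv; rewrite ?m0 ?md ?ler0n //.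
  by rewrite -ltnNge in dq; rewrite -(natrD R d 2) ler_nat addn2.
have := ler_wpM2l (_ : 0 <= d.+1%:R ^+ 2 / 2 :> R) HQ.
by rewrite divr_ge0 ?sqr_ge0 //; lra.
Qed.

Lemma exprn_le_expR_fact (R : realType) l :
  (l%:R : R) ^+ l <= expR l%:R * l`!%:R.
Proof.
case: l => [|n]; first by rewrite expr0 expR0 mul1r.
have := @expR_ge1Dxn R n.+1%:R n (ler0n _ _).
rewrite -ler_pdivrMr ?ltr0n ?fact_gt0 //; lra.
Qed.

Lemma taylor_term_le (R : realType) (X a : R) l :
  (0 < l)%N -> 0 <= X -> X <= a ->
  X ^+ l.+1 / l.+1`!%:R <= (expR 1 * a / l%:R) ^+ l * a.
Proof.
move=> l0 X0 Xa; have a0 := le_trans X0 Xa.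
have F0 : (0 : R) < l`!%:R by rewrite ltr0n fact_gt0.
have P0 : (0 : R) < l%:R ^+ l by rewrite exprn_gt0 // ltr0n.
apply: (@le_trans _ _ (a ^+ l.+1 / l`!%:R)).
  rewrite [l.+1`!]factS natrM; apply: ler_pM; rewrite ?exprn_ge0 //.
    by rewrite lerXn2r // nnegrE.
  rewrite lef_pV2 ?posrE ?mulr_gt0 ?ltr0n ?fact_gt0 //.
  by rewrite ler_peMl ?ler1n // ltW.
rewrite exprMn exprMn exprVn -expRM_natl mulr1.
have -> : expR l%:R * a ^+ l / l%:R ^+ l * a
        = a ^+ l.+1 * expR l%:R / l%:R ^+ l by rewrite exprSr; ring.
rewrite ler_pdivlMr // mulrAC ler_pdivrMr // -mulrA.
by rewrite ler_wpM2l ?exprn_ge0 // exprn_le_expR_fact.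
Qed.

Lemma expR_sum_odds_le_prod1B (R : realType) (xs : seq R) :
  all (fun x => 0 <= x < 1) xs ->
  expR (- \sum_(x <- xs) odds x) <= \prod_(x <- xs) (1 - x).
Proof.
elim: xs => [|x xs IH]; first by rewrite !big_nil oppr0 expR0.
rewrite /= => /andP[/andP[x0 x1] xs01]; rewrite !big_cons opprD expRD.
rewrite ler_pM ?expR_ge0 ?IH // expRN -[leRHS]invrK lef_pV2 ?posrE ?expR_gt0 //;
  last by rewrite invr_gt0 subr_gt0.
apply: le_trans (expR_ge1Dx _); rewrite /odds.
by rewrite le_eqVlt; apply/orP; left; apply/eqP; field; rewrite gt_eqF ?subr_gt0.
Qed.

Lemma trunc_prod1B_ge (R : realType) (xs : seq R) (a : R) l :
  (0 < l)%N -> all (fun x => 0 <= x < 1) xs -> \sum_(x <- xs) odds x <= a ->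
  \prod_(x <- xs) (1 - x) * (1 - (expR 1 * a / l%:R) ^+ l * a * expR a)
    <= trunc_prod1B xs l.
Proof.
move=> l0 xs01 Ya.
have xs01' : all (fun x => 0 <= x <= 1) xs.
  by apply: sub_all xs01 => x /andP[-> /ltW].
have X0 : 0 <= \sum_(x <- xs) x.
  by rewrite big_seq sumr_ge0 // => x /(allP xs01)/andP[].
have XY : \sum_(x <- xs) x <= \sum_(x <- xs) odds x.
  rewrite big_seq [leRHS]big_seq ler_sum // => x /(allP xs01)/andP[x0 x1].
  by rewrite /odds ler_pdivlMr ?subr_gt0 //; nra.
have Xa := le_trans XY Ya; have a0 := le_trans X0 Xa.
have err := le_trans (ler_norm _) (trunc_prod1B_error l xs01').
have := taylor_term_le l0 X0 Xa; set C := _ * a => taylor.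
have C0 : 0 <= C by rewrite mulr_ge0 ?exprn_ge0 ?divr_ge0 ?mulr_ge0 ?expR_ge0.
have W1 : 1 <= \prod_(x <- xs) (1 - x) * expR a.
  apply: le_trans (ler_wpM2r (expR_ge0 _) (expR_sum_odds_le_prod1B xs01)).
  by rewrite -expRD -[leLHS]expR0 ler_expR addrC subr_ge0.
have : C <= \prod_(x <- xs) (1 - x) * expR a * C by rewrite ler_peMl.
lra.
Qed.

Lemma add2_lnln_ge0 (R : realType) k : (0 < k)%N -> 0 <= 2 + ln (ln (k.+1%:R : R)).
Proof.
move=> k0; have l2 := ln2_ge R.
have lk : ln 2 <= ln (k.+1%:R : R) by rewrite ler_ln ?posrE ?ltr0n // ler_nat ltnS.
have lp : 0 < ln (k.+1%:R : R) by lra.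
have : (ln (k.+1%:R : R))^-1 <= 8 / 5.
  by rewrite -[8 / 5](invf_div (5 : R) 8) lef_pV2 ?posrE //; lra.
have := le1Bv_ln lp; lra.
Qed.

Unset Implicit Arguments.

Theorem mainTheorem4 (R : realType) (Q : seq nat) (d ell : nat) (m : nat -> R) :
  Q != [::] -> uniq Q -> all prime Q ->
  (1 <= d)%N -> (0 < ell)%N -> odd ell ->
  (forall n : nat, (0 < n)%N -> 0 < m n) ->
  multiplicative_fn m ->
  (forall q, q \in Q -> m q <= q%:R - 1) ->
  (forall q, q \in Q -> m q <= d%:R) ->
  let alpha := (d.+1%:R) ^+ 2 * (2 + ln (ln ((size Q).+1%:R))) in
  \sum_(r <- divisors (\prod_(q <- Q) q)%N | (omega r <= ell)%N)
      (mobius r)%:~R * m r / r%:R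
  >= (\prod_(q <- Q) (1 - m q / q%:R))
     * (1 - (expR 1 * alpha / ell%:R) ^+ ell * alpha * expR alpha).
Proof.
move=> Q0 uQ pQ _ ell0 _ m_gt0 mM mQ1 mQd; lazy zeta.
set alpha := _ ^+ 2 * _.
have mQ_gt0 q : q \in Q -> 0 < m q by move/(allP pQ)/prime_gt0/m_gt0.
have m1 : m 1%N = 1 by rewrite multiplicative_fn1 // gt_eqF ?m_gt0.
rewrite sum_divisors_mobius_omega_le //.
rewrite -(big_map (fun q => m q / q%:R) predT (fun x => 1 - x)).
have xs01 : all (fun x => 0 <= x < 1) [seq m q / q%:R | q <- Q].
  apply/allP => _ /mapP[q qQ ->].
  have q0 : (0 : R) < q%:R by rewrite ltr0n prime_gt0 ?(allP pQ).
  by rewrite divr_ge0 ?ltW ?mQ_gt0 //= ltr_pdivrMr // mul1r; have := mQ1 q qQ; lra.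
have [Qell | ellQ] := leqP (size Q) ell; last first.
  apply: trunc_prod1B_ge => //; rewrite big_map.
  by apply: sum_odds_le => //; apply: leq_ltn_trans ellQ.
have alpha0 : 0 <= alpha by rewrite mulr_ge0 ?sqr_ge0 ?add2_lnln_ge0 ?lt0n ?size_eq0.
have /andP[W0 _] : 0 <= \prod_(x <- [seq m q / q%:R | q <- Q]) (1 - x) <= 1.
  by apply/prod1B_ge0_le1/(sub_all _ xs01) => x /andP[-> /ltW].
rewrite trunc_prod1B_full ?size_map // ler_piMr // lerBlDr lerDl.
rewrite mulr_ge0 ?expR_ge0 // mulr_ge0 // exprn_ge0 //.
by rewrite divr_ge0 // mulr_ge0 ?expR_ge0.
Qed.
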